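(* For a Markov category $\mathcal C$, the following are equivalent: (i) $\mathcal C$ is positive. (ii) $\mathcal C$ satisfies deterministic marginal independence. (iii) For every morphism $q\colon A\to X\otimes E$, $q$ is deterministic in $X$ if and only if its marginal $q_X$ is deterministic.
   Context: A Markov category is a symmetric monoidal category $(\mathcal C,\otimes,I)$ (unitors suppressed) in which every object $X$ carries morphisms $\mathrm{copy}_X\colon X\to X\otimes X$ and $\mathrm{del}_X\colon X\to I$ forming a commutative comonoid, compatible with the monoidal structure ($\mathrm{copy}_{X\otimes Y}$ is $\mathrm{copy}_X\otimes\mathrm{copy}_Y$ followed by swapping the middle factors, $\mathrm{del}_{X\otimes Y}=\mathrm{del}_X\otimes\mathrm{del}_Y$), with $I$ terminal. For $q\colon A\to X\otimes E$, its marginals are $q_X=(\mathrm{id}_X\otimes\mathrm{del}_E)\circ q$ and $q_E=(\mathrm{del}_X\otimes\mathrm{id}_E)\circ q$. A morphism $f\colon A\to X$ is deterministic if $\mathrm{copy}_X\circ f=(f\otimes f)\circ\mathrm{copy}_A$. $\mathcal C$ is positive if for all $f\colon X\to Y$, $g\colon Y\to Z$ with $g\circ f$ deterministic, $(\mathrm{id}_Y\otimes g)\circ\mathrm{copy}_Y\circ f=(f\otimes (g\circ f))\circ\mathrm{copy}_X$. A dilation of $p\colon A\to X$ is a morphism $\pi\colon A\to X\otimes E$ (for some object $E$) with $\pi_X=p$. $\mathcal C$ satisfies deterministic marginal independence if for every deterministic $p\colon A\to X$ and every dilation $\pi\colon A\to X\otimes E$ of $p$, one has $\pi=(p\otimes\pi_E)\circ\mathrm{copy}_A$.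 A morphism $q\colon A\to X\otimes E$ is deterministic in $X$ if $(\mathrm{copy}_X\otimes\mathrm{id}_E)\circ q=(q_X\otimes q)\circ\mathrm{copy}_A$ as morphisms $A\to X\otimes X\otimes E$. *)

(* The symmetric monoidal structure is NOT assumed strict: associator,
   unitors and symmetry are explicit, with the usual coherence axioms. *)

Set Implicit Arguments.
Unset Strict Implicit.

Record MarkovCat := {
  Ob : Type;
  Hom : Ob -> Ob -> Type;
  comp : forall {A B C : Ob}, Hom B C -> Hom A B -> Hom A C;
  idm : forall (A : Ob), Hom A A;
  comp_assoc : forall A B C D (f : Hom A B) (g : Hom B C) (h : Hom C D),
      comp h (comp g f) = comp (comp h g) f;
  comp_id_l : forall A B (f : Hom A B), comp (idm B) f = f;
  comp_id_r : forall A B (f : Hom A B), comp f (idm A) = f;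

  tens : Ob -> Ob -> Ob;
  unit : Ob;
  tensm : forall {A B C D : Ob}, Hom A B -> Hom C D -> Hom (tens A C) (tens B D);
  tensm_id : forall A B, tensm (idm A) (idm B) = idm (tens A B);
  tensm_comp : forall A B C A' B' C' (f : Hom A B) (g : Hom B C)
      (f' : Hom A' B') (g' : Hom B' C'),
      tensm (comp g f) (comp g' f') = comp (tensm g g') (tensm f f');

  assoc : forall (A B C : Ob), Hom (tens (tens A B) C) (tens A (tens B C));
  assoc_inv : forall (A B C : Ob), Hom (tens A (tens B C)) (tens (tens A B) C);
  assoc_iso1 : forall A B C, comp (assoc_inv A B C) (assoc A B C) = idm _;
  assoc_iso2 : forall A B C, comp (assoc A B C) (assoc_inv A B C) = idm _;
  assoc_nat : forall A A' B B' C C' (f : Hom A A') (g : Hom B B') (h : Hom C C'),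
      comp (assoc A' B' C') (tensm (tensm f g) h)
      = comp (tensm f (tensm g h)) (assoc A B C);
  lunit : forall (A : Ob), Hom (tens unit A) A;
  lunit_inv : forall (A : Ob), Hom A (tens unit A);
  lunit_iso1 : forall A, comp (lunit_inv A) (lunit A) = idm _;
  lunit_iso2 : forall A, comp (lunit A) (lunit_inv A) = idm _;
  lunit_nat : forall A B (f : Hom A B),
      comp (lunit B) (tensm (idm unit) f) = comp f (lunit A);
  runit : forall (A : Ob), Hom (tens A unit) A;
  runit_inv : forall (A : Ob), Hom A (tens A unit);
  runit_iso1 : forall A, comp (runit_inv A) (runit A) = idm _;
  runit_iso2 : forall A, comp (runit A) (runit_inv A) = idm _;
  runit_nat : forall A B (f : Hom A B),
      comp (runit B) (tensm f (idm unit)) = comp f (runit A);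
  swap : forall (A B : Ob), Hom (tens A B) (tens B A);
  swap_nat : forall A A' B B' (f : Hom A A') (g : Hom B B'),
      comp (swap A' B') (tensm f g) = comp (tensm g f) (swap A B);
  swap_invol : forall A B, comp (swap B A) (swap A B) = idm _;
  pentagon : forall A B C D,
      comp (assoc A B (tens C D)) (assoc (tens A B) C D)
      = comp (tensm (idm A) (assoc B C D))
             (comp (assoc A (tens B C) D) (tensm (assoc A B C) (idm D)));
  triangle : forall A B,
      comp (tensm (idm A) (lunit B)) (assoc A unit B)
      = tensm (runit A) (idm B);
  hexagon : forall A B C,
      comp (assoc B C A) (comp (swap A (tens B C)) (assoc A B C))
      = comp (tensm (idm B) (swap A C))
             (comp (assoc B A C) (tensm (swap A B) (idm C)));

  copy : forall (X : Ob), Hom X (tens X X);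
  del : forall (X : Ob), Hom X unit;
  counit_l : forall X,
      comp (lunit X) (comp (tensm (del X) (idm X)) (copy X)) = idm X;
  counit_r : forall X,
      comp (runit X) (comp (tensm (idm X) (del X)) (copy X)) = idm X;
  coassoc : forall X,
      comp (assoc X X X) (comp (tensm (copy X) (idm X)) (copy X))
      = comp (tensm (idm X) (copy X)) (copy X);
  cocomm : forall X, comp (swap X X) (copy X) = copy X;

  copy_tens : forall X Y,
      copy (tens X Y)
      = comp (assoc_inv X Y (tens X Y))
        (comp (tensm (idm X) (assoc Y X Y))
        (comp (tensm (idm X) (tensm (swap X Y) (idm Y)))
        (comp (tensm (idm X) (assoc_inv X Y Y))
        (comp (assoc X X (tens Y Y))
              (tensm (copy X) (copy Y))))));
  del_tens : forall X Y,
      del (tens X Y) = comp (lunit unit) (tensm (del X) (del Y));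

  (* the monoidal unit is terminal (existence is given by del) *)
  unit_terminal : forall A (f g : Hom A unit), f = g
}.

Arguments Hom : clear implicits.
Arguments Ob : clear implicits.
Arguments comp {_ A B C}.
Arguments idm {_}.
Arguments tens {_}.
Arguments unit {_}.
Arguments tensm {_ A B C D}.
Arguments assoc {_}.
Arguments lunit {_}.
Arguments runit {_}.
Arguments swap {_}.
Arguments copy {_}.
Arguments del {_}.

Section MarkovDefs.
Variable C : MarkovCat.

Definition marg1 {A X E : Ob C} (q : Hom C A (tens X E)) : Hom C A X :=
  comp (runit X) (comp (tensm (idm X) (del E)) q).
Definition marg2 {A X E : Ob C} (q : Hom C A (tens X E)) : Hom C A E :=
  comp (lunit E) (comp (tensm (del X) (idm E)) q).

Definition deterministic {A X : Ob C} (f : Hom C A X) : Prop :=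
  comp (copy X) f = comp (tensm f f) (copy A).

Definition positive : Prop :=
  forall (X Y Z : Ob C) (f : Hom C X Y) (g : Hom C Y Z),
    deterministic (comp g f) ->
    comp (tensm (idm Y) g) (comp (copy Y) f)
    = comp (tensm f (comp g f)) (copy X).

Definition dilation {A X E : Ob C} (p : Hom C A X) (pi : Hom C A (tens X E))
  : Prop := marg1 pi = p.

Definition det_marginal_independence : Prop :=
  forall (A X E : Ob C) (p : Hom C A X) (pi : Hom C A (tens X E)),
    deterministic p -> dilation p pi ->
    pi = comp (tensm p (marg2 pi)) (copy A).

(* q : A -> X (x) E is deterministic in X; the two sides live in
   (X (x) X) (x) E and X (x) (X (x) E), identified via the associator. *)
Definition deterministic_in_X {A X E : Ob C} (q : Hom C A (tens X E)) : Prop :=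
  comp (assoc X X E) (comp (tensm (copy X) (idm E)) q)
  = comp (tensm (marg1 q) q) (copy A).

End MarkovDefs.

Arguments positive : clear implicits.
Arguments det_marginal_independence : clear implicits.

(* Write proj_l, proj_r for the two marginalisations out of X ⊗ E; every
   q : A -> X ⊗ E is recovered as (proj_l ⊗ proj_r) ∘ copy ∘ q.  Read with
   the two copies swapped, positivity for f and g says that the dilation
   (g ⊗ id) ∘ copy ∘ f of g ∘ f, whose other marginal is f, splits as
   (g ∘ f ⊗ f) ∘ copy; conversely, applied to f := π and g := proj_l it splits
   an arbitrary dilation π of a deterministic morphism.  For (iii), deleting E
   in the equation "q is deterministic in X" shows that q_X is deterministic,
   and deleting the second copy of X shows q = (q_X ⊗ q_E) ∘ copy; such a
   product with deterministic q_X is deterministic in X by coassociativity. *)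


Section Markov.

Variable C : MarkovCat.

Local Infix "∘" := comp (at level 40, left associativity).
Local Infix "⊗" := tensm (at level 35, right associativity).

Lemma comp2_extend {A B B' D Z : Ob C} {a : Hom C B D} {b : Hom C A B}
    {c : Hom C B' D} {d : Hom C A B'} :
  a ∘ b = c ∘ d -> forall k : Hom C Z A, a ∘ (b ∘ k) = c ∘ (d ∘ k).
Proof. intros H k. rewrite !comp_assoc, H. reflexivity. Qed.

Lemma comp_extend {A B D Z : Ob C} {a : Hom C B D} {b : Hom C A B}
    {c : Hom C A D} :
  a ∘ b = c -> forall k : Hom C Z A, a ∘ (b ∘ k) = c ∘ k.
Proof. intros H k. rewrite comp_assoc, H. reflexivity. Qed.

Ltac rewrite_comp H :=
  first [rewrite (comp2_extend H) | rewrite (comp_extend H) | rewrite H].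
Ltac rewrite_comp_rev H := first [rewrite <- (comp2_extend H) | rewrite <- H].
Ltac assoc_right := repeat rewrite <- comp_assoc.

Lemma tensm_comp_l {A B D E : Ob C} (g : Hom C B D) (f : Hom C A B) :
  (g ⊗ idm E) ∘ (f ⊗ idm E) = (g ∘ f) ⊗ idm E.
Proof. rewrite <- tensm_comp, comp_id_l. reflexivity. Qed.

Lemma tensm_comp_r {A B D E : Ob C} (g : Hom C B D) (f : Hom C A B) :
  (idm E ⊗ g) ∘ (idm E ⊗ f) = idm E ⊗ (g ∘ f).
Proof. rewrite <- tensm_comp, comp_id_l. reflexivity. Qed.

Lemma tensm_split_l {A B A' B' : Ob C} (f : Hom C A B) (g : Hom C A' B') :
  f ⊗ g = (f ⊗ idm B') ∘ (idm A ⊗ g).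
Proof. rewrite <- tensm_comp, comp_id_l, comp_id_r. reflexivity. Qed.

Lemma tensm_split_r {A B A' B' : Ob C} (f : Hom C A B) (g : Hom C A' B') :
  f ⊗ g = (idm B ⊗ g) ∘ (f ⊗ idm A').
Proof. rewrite <- tensm_comp, comp_id_l, comp_id_r. reflexivity. Qed.

Lemma assoc_inv_nat {A A' B B' D D' : Ob C}
    (f : Hom C A A') (g : Hom C B B') (h : Hom C D D') :
  assoc_inv A' B' D' ∘ (f ⊗ (g ⊗ h)) = ((f ⊗ g) ⊗ h) ∘ assoc_inv A B D.
Proof.
  rewrite <- (comp_id_r (assoc_inv A' B' D' ∘ _)), <- (assoc_iso2 A B D).
  assoc_right. rewrite <- (comp2_extend (assoc_nat f g h)).
  rewrite comp_assoc, assoc_iso1, comp_id_l. reflexivity.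
Qed.

Lemma tensm_unit_inj {A B : Ob C} (f g : Hom C A B) :
  f ⊗ idm unit = g ⊗ idm unit -> f = g.
Proof.
  intro H. rewrite <- (comp_id_r f), <- (comp_id_r g), <- (runit_iso2 A).
  rewrite !comp_assoc, <- !runit_nat, H. reflexivity.
Qed.

Lemma assoc_cancel {A B D E : Ob C} (f g : Hom C E (tens (tens A B) D)) :
  assoc A B D ∘ f = assoc A B D ∘ g -> f = g.
Proof.
  intro H. rewrite <- (comp_id_l f), <- (comp_id_l g), <- (assoc_iso1 A B D).
  rewrite <- !comp_assoc, H. reflexivity.
Qed.

Lemma assoc_runit (A B : Ob C) :
  (idm A ⊗ runit B) ∘ assoc A B unit = runit (tens A B).
Proof.
  apply tensm_unit_inj, assoc_cancel.
  rewrite <- tensm_comp_l.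
  rewrite_comp (assoc_nat (idm A) (runit B) (idm unit)).
  rewrite <- (triangle (tens A B) unit), <- (tensm_id A B).
  rewrite_comp (assoc_nat (idm A) (idm B) (lunit unit)).
  rewrite_comp (pentagon A B unit unit).
  rewrite_comp (tensm_comp_r (E := A) (idm B ⊗ lunit unit) (assoc B unit unit)).
  rewrite triangle. reflexivity.
Qed.

Lemma tensm_idm_l_nat {A A' B B' B'' D : Ob C} (f : Hom C A A')
    {x : Hom C B' D} {y : Hom C B B'} {z : Hom C B'' D} {w : Hom C B B''} :
  x ∘ y = z ∘ w -> (idm A' ⊗ x) ∘ (f ⊗ y) = (f ⊗ z) ∘ (idm A ⊗ w).
Proof. intro H. rewrite <- !tensm_comp, comp_id_l, comp_id_r, H. reflexivity. Qed.

Lemma tensm_idm_r_nat {A A' B B' B'' D : Ob C} (f : Hom C A A')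
    {x : Hom C B' D} {y : Hom C B B'} {z : Hom C B'' D} {w : Hom C B B''} :
  x ∘ y = z ∘ w -> (x ⊗ idm A') ∘ (y ⊗ f) = (z ⊗ f) ∘ (w ⊗ idm A).
Proof. intro H. rewrite <- !tensm_comp, comp_id_l, comp_id_r, H. reflexivity. Qed.

Lemma swap_unit_unit : swap (m := C) unit unit = idm (tens unit unit).
Proof.
  rewrite <- (comp_id_l (swap unit unit)), <- lunit_iso1, <- comp_assoc.
  rewrite (unit_terminal (lunit unit ∘ swap unit unit) (lunit unit)).
  reflexivity.
Qed.

Definition mid_swap (A B D E : Ob C) :
    Hom C (tens (tens A B) (tens D E)) (tens (tens A D) (tens B E)) :=
  assoc_inv A D (tens B E) ∘ (idm A ⊗ assoc D B E) ∘ (idm A ⊗ (swap B D ⊗ idm E))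
  ∘ (idm A ⊗ assoc_inv B D E) ∘ assoc A B (tens D E).

Lemma copy_tensE (X Y : Ob C) :
  copy (tens X Y) = mid_swap X X Y Y ∘ (copy X ⊗ copy Y).
Proof. rewrite copy_tens. unfold mid_swap. rewrite !comp_assoc. reflexivity. Qed.

Lemma mid_swap_nat {A A' B B' D D' E E' : Ob C} (f : Hom C A A') (g : Hom C B B')
    (h : Hom C D D') (k : Hom C E E') :
  mid_swap A' B' D' E' ∘ ((f ⊗ g) ⊗ (h ⊗ k)) = ((f ⊗ h) ⊗ (g ⊗ k)) ∘ mid_swap A B D E.
Proof.
  unfold mid_swap. assoc_right.
  rewrite_comp (assoc_nat f g (h ⊗ k)).
  rewrite_comp (tensm_idm_l_nat f (assoc_inv_nat g h k)).
  rewrite_comp (tensm_idm_l_nat f (tensm_idm_r_nat k (swap_nat g h))).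
  rewrite_comp (tensm_idm_l_nat f (assoc_nat h g k)).
  rewrite_comp (assoc_inv_nat f h (g ⊗ k)).
  reflexivity.
Qed.

Lemma mid_swap_unit (A E : Ob C) : mid_swap A unit unit E = idm _.
Proof.
  unfold mid_swap.
  rewrite swap_unit_unit, !tensm_id, comp_id_r. assoc_right.
  rewrite_comp (tensm_comp_r (E := A) (assoc unit unit E) (assoc_inv unit unit E)).
  rewrite assoc_iso2, tensm_id, comp_id_l. apply assoc_iso1.
Qed.

Definition proj_l (X E : Ob C) : Hom C (tens X E) X := runit X ∘ (idm X ⊗ del E).
Definition proj_r (X E : Ob C) : Hom C (tens X E) E := lunit E ∘ (del X ⊗ idm E).

Lemma marg1E {A X E : Ob C} (q : Hom C A (tens X E)) : marg1 q = proj_l X E ∘ q.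
Proof. apply comp_assoc. Qed.

Lemma marg2E {A X E : Ob C} (q : Hom C A (tens X E)) : marg2 q = proj_r X E ∘ q.
Proof. apply comp_assoc. Qed.

Lemma marg1_comp {A B X E : Ob C} (q : Hom C B (tens X E)) (f : Hom C A B) :
  marg1 (q ∘ f) = marg1 q ∘ f.
Proof. rewrite !marg1E. apply comp_assoc. Qed.

Lemma marg2_comp {A B X E : Ob C} (q : Hom C B (tens X E)) (f : Hom C A B) :
  marg2 (q ∘ f) = marg2 q ∘ f.
Proof. rewrite !marg2E. apply comp_assoc. Qed.

Lemma proj_l_tensm {A B D E : Ob C} (f : Hom C A B) (g : Hom C D E) :
  proj_l B E ∘ (f ⊗ g) = f ∘ proj_l A D.
Proof.
  unfold proj_l. assoc_right.
  rewrite <- tensm_comp, comp_id_l, (unit_terminal (del E ∘ g) (del D)).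
  rewrite (tensm_split_l f (del D)). rewrite_comp (runit_nat f). reflexivity.
Qed.

Lemma proj_r_tensm {A B D E : Ob C} (f : Hom C A B) (g : Hom C D E) :
  proj_r B E ∘ (f ⊗ g) = g ∘ proj_r A D.
Proof.
  unfold proj_r. assoc_right.
  rewrite <- tensm_comp, comp_id_l, (unit_terminal (del B ∘ f) (del A)).
  rewrite (tensm_split_r (del A) g). rewrite_comp (lunit_nat g). reflexivity.
Qed.

Lemma proj_l_copy (X : Ob C) : proj_l X X ∘ copy X = idm X.
Proof. unfold proj_l. rewrite <- comp_assoc. apply counit_r. Qed.

Lemma proj_r_copy (X : Ob C) : proj_r X X ∘ copy X = idm X.
Proof. unfold proj_r. rewrite <- comp_assoc. apply counit_l. Qed.

Lemma marg1_tensm_copy {A X E : Ob C} (f : Hom C A X) (g : Hom C A E) :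
  marg1 ((f ⊗ g) ∘ copy A) = f.
Proof.
  rewrite marg1E, comp_assoc, proj_l_tensm, <- comp_assoc, proj_l_copy.
  apply comp_id_r.
Qed.

Lemma marg2_tensm_copy {A X E : Ob C} (f : Hom C A X) (g : Hom C A E) :
  marg2 ((f ⊗ g) ∘ copy A) = g.
Proof.
  rewrite marg2E, comp_assoc, proj_r_tensm, <- comp_assoc, proj_r_copy.
  apply comp_id_r.
Qed.

Lemma tensm_proj_copy (X E : Ob C) :
  (proj_l X E ⊗ proj_r X E) ∘ copy (tens X E) = idm (tens X E).
Proof.
  rewrite copy_tensE. unfold proj_l, proj_r.
  (* after deleting, the middle swap only acts on unit ⊗ unit *)
  rewrite tensm_comp. assoc_right.
  rewrite_comp_rev (mid_swap_nat (idm X) (del X) (del E) (idm E)).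
  rewrite mid_swap_unit, comp_id_l, <- !tensm_comp, counit_r, counit_l.
  apply tensm_id.
Qed.

Lemma assoc_proj_l (A B E : Ob C) :
  (idm A ⊗ proj_l B E) ∘ assoc A B E = proj_l (tens A B) E.
Proof.
  unfold proj_l. rewrite <- tensm_comp_r. assoc_right.
  rewrite_comp_rev (assoc_nat (idm A) (idm B) (del E)).
  rewrite comp_assoc, assoc_runit, tensm_id. reflexivity.
Qed.

Lemma assoc_proj_r (A B E : Ob C) :
  (idm A ⊗ proj_r B E) ∘ assoc A B E = proj_l A B ⊗ idm E.
Proof.
  unfold proj_l, proj_r. rewrite <- tensm_comp_r. assoc_right.
  rewrite_comp_rev (assoc_nat (idm A) (del B) (idm E)).
  rewrite comp_assoc, triangle. apply tensm_comp_l.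
Qed.

Lemma swap_tensm_copy {A Y Z : Ob C} (f : Hom C A Y) (g : Hom C A Z) :
  swap Y Z ∘ ((f ⊗ g) ∘ copy A) = (g ⊗ f) ∘ copy A.
Proof. rewrite comp_assoc, swap_nat, <- comp_assoc, cocomm. reflexivity. Qed.

Lemma positive_swapped :
  positive C <->
  forall (X Y Z : Ob C) (f : Hom C X Y) (g : Hom C Y Z),
    deterministic (g ∘ f) -> (g ⊗ idm Y) ∘ (copy Y ∘ f) = ((g ∘ f) ⊗ f) ∘ copy X.
Proof.
  unfold positive. split; intros Hpos X Y Z f g Hdet.
  - rewrite <- (comp_id_l (_ ∘ (copy Y ∘ f))), <- (swap_invol Z Y), <- comp_assoc.
    rewrite (comp_assoc f (copy Y)), (comp_assoc f _ (swap Z Y)), swap_tensm_copy.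
    rewrite <- (comp_assoc f), Hpos by exact Hdet.
    apply swap_tensm_copy.
  - rewrite comp_assoc, <- (swap_tensm_copy g (idm Y)), <- !comp_assoc, Hpos by exact Hdet.
    apply swap_tensm_copy.
Qed.

Lemma deterministic_in_X_marg1 {A X E : Ob C} (q : Hom C A (tens X E)) :
  deterministic_in_X q -> deterministic (marg1 q).
Proof.
  unfold deterministic_in_X, deterministic. intro Hq.
  apply (f_equal (comp (idm X ⊗ proj_l X E))) in Hq.
  rewrite comp_assoc, assoc_proj_l, comp_assoc, proj_l_tensm, <- comp_assoc in Hq.
  rewrite <- marg1E, comp_assoc, <- tensm_comp, comp_id_l, <- marg1E in Hq.
  exact Hq.
Qed.

Lemma deterministic_in_X_split {A X E : Ob C} (q : Hom C A (tens X E)) :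
  deterministic_in_X q -> q = (marg1 q ⊗ marg2 q) ∘ copy A.
Proof.
  unfold deterministic_in_X. intro Hq.
  apply (f_equal (comp (idm X ⊗ proj_r X E))) in Hq.
  rewrite comp_assoc, assoc_proj_r, comp_assoc, tensm_comp_l, proj_l_copy in Hq.
  rewrite tensm_id, comp_id_l, comp_assoc, <- tensm_comp, comp_id_l, <- marg2E in Hq.
  exact Hq.
Qed.

Lemma tensm_copy_deterministic_in_X {A X E : Ob C} (p : Hom C A X) (e : Hom C A E) :
  deterministic p -> deterministic_in_X ((p ⊗ e) ∘ copy A).
Proof.
  unfold deterministic_in_X, deterministic. intro Hp.
  rewrite marg1_tensm_copy, (comp_assoc (copy A) (p ⊗ e)), <- tensm_comp, Hp.
  rewrite comp_id_l, <- (comp_id_r e), tensm_comp. assoc_right.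
  rewrite_comp (assoc_nat p p e). rewrite (coassoc A).
  rewrite comp_assoc, <- tensm_comp, !comp_id_r. reflexivity.
Qed.

Lemma positive_iff_det_marginal_independence :
  positive C <-> det_marginal_independence C.
Proof.
  unfold det_marginal_independence, dilation. split.
  - intros Hpos A X E p pi Hp Hpi.
    assert (Hsplit := proj1 positive_swapped Hpos _ _ _ pi (proj_l X E)).
    rewrite <- marg1E, Hpi in Hsplit.
    transitivity ((proj_l X E ⊗ proj_r X E) ∘ copy _ ∘ pi).
    { rewrite tensm_proj_copy, comp_id_l. reflexivity. }
    rewrite tensm_split_r. assoc_right. rewrite (Hsplit Hp).
    rewrite comp_assoc, <- tensm_comp, comp_id_l, <- marg2E. reflexivity.
  - intros Hdmi. apply (proj2 positive_swapped). intros X Y Z f g Hdet.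
    assert (Hsplit := Hdmi _ _ _ (g ∘ f) ((g ⊗ idm Y) ∘ (copy Y ∘ f)) Hdet).
    rewrite (comp_assoc f (copy Y)), marg1_comp, marg2_comp in Hsplit.
    rewrite marg1_tensm_copy, marg2_tensm_copy, comp_id_l in Hsplit.
    rewrite comp_assoc. apply Hsplit. reflexivity.
Qed.

Lemma det_marginal_independence_iff_deterministic_in_X :
  det_marginal_independence C <->
  forall (A X E : Ob C) (q : Hom C A (tens X E)),
    deterministic_in_X q <-> deterministic (marg1 q).
Proof.
  unfold det_marginal_independence, dilation. split.
  - intros Hdmi A X E q. split; [apply deterministic_in_X_marg1 |].
    intro Hdet. rewrite (Hdmi _ _ _ _ q Hdet eq_refl).
    apply tensm_copy_deterministic_in_X, Hdet.
  - intros Hdet_in_X A X E p pi Hp Hpi.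
    rewrite <- Hpi. apply deterministic_in_X_split, Hdet_in_X.
    rewrite Hpi. exact Hp.
Qed.

End Markov.

Theorem theorem2p8 (C : MarkovCat) :
  (positive C <-> det_marginal_independence C) /\
  (det_marginal_independence C <->
     (forall (A X E : Ob C) (q : Hom C A (tens X E)),
        deterministic_in_X q <-> deterministic (marg1 q))).
Proof.
  split.
  - apply positive_iff_det_marginal_independence.
  - apply det_marginal_independence_iff_deterministic_in_X.
Qed.
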